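(* Let $\mathcal{A}$ be a virtual orbifold atlas on a compact metrizable space $X$, indexed by a finite poset $\mathcal{I}$, for which the relation $\curlyvee$ is an equivalence relation. Order $\mathcal{I}$ as $\{I_1,\dots,I_m\}$ such that for each $k$, $I_k\preccurlyeq J$ implies $J\in\{I_k,I_{k+1},\dots,I_m\}$. For each $k$ let $|\mathcal{A}_k|$ be the quotient of $\bigsqcup_{i\ge k}U_{I_i}$ by the equivalence relation induced by $\curlyvee$, with the quotient topology. Then for each $k<m$ the natural map $|\mathcal{A}_{k+1}|\to|\mathcal{A}_k|$ is a homeomorphism onto an open subset.
   Context: A topological orbifold (possibly non-effective) and an orbifold vector bundle are defined via charts $(\tilde U,\Gamma,\varphi)$ with $\tilde U$ a topological manifold and $\Gamma$ a finite group acting continuously. A virtual orbifold chart on $X$ is $C=(U,E,S,\psi,F)$: $U$ an orbifold, $E\to U$ an orbifold vector bundle, $S$ a continuous section, $F\subset X$ open, $\psi:S^{-1}(0)\to F$ a homeomorphism. A coordinate change from $C_I$ to $C_J$ is $T_{JI}=(U_{JI},\phi_{JI},\widehat\phi_{JI})$: $U_{JI}\subset U_I$ open, $\phi_{JI}:U_{JI}\to U_J$ an orbifold embedding (continuous, homeomorphism onto its image, locally an equivariant locally flat embedding) covered by a fibrewise injective linear bundle embedding $\widehat\phi_{JI}$, intertwining sections and the maps $\psi$, with footprint $F_I\cap F_J$, satisfying a tangent bundle condition and the closedness condition (if $x_k\in U_{JI}\to x_\infty\in U_I$ and $\phi_{JI}(x_k)\to y_\infty$ then $x_\infty\in U_{JI}$,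 $y_\infty=\phi_{JI}(x_\infty)$). A virtual orbifold atlas: finite poset $(\mathcal{I},\preccurlyeq)$, charts $C_I$, coordinate changes $T_{JI}$ for $I\preccurlyeq J$, footprints covering $X$, cocycle condition $\widehat\phi_{KI}=\widehat\phi_{KJ}\circ\widehat\phi_{JI}$ on $U_{KI}\cap\phi_{JI}^{-1}(U_{KJ})$, and overlapping condition ($\overline{F_I}\cap\overline{F_J}\ne\emptyset\Rightarrow I\preccurlyeq J$ or $J\preccurlyeq I$). The relation $\curlyvee$ on $\bigsqcup_IU_I$: $x\in U_I$, $y\in U_J$ satisfy $x\curlyvee y$ iff ($I=J$, $x=y$) or ($I\preccurlyeq J$, $x\in U_{JI}$, $y=\phi_{JI}(x)$) or ($J\preccurlyeq I$, $y\in U_{IJ}$, $x=\phi_{IJ}(y)$). *)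

From HB Require Import structures.
From mathcomp Require Import all_boot all_order all_algebra.
From mathcomp Require Import all_classical all_reals all_analysis.
From Stdlib Require Rdefinitions Raxioms.

Set Implicit Arguments.
Unset Strict Implicit.
Unset Printing Implicit Defensive.

Import Order.TTheory GRing.Theory Num.Theory.
Local Open Scope classical_set_scope.

Definition metrizable (X : topologicalType) : Prop :=
  exists d : X -> X -> Rdefinitions.R,
    (forall x y, d x y = Rdefinitions.R0 <-> x = y) /\
    (forall x y, d x y = d y x) /\
    (forall x y z, Rdefinitions.Rle (d x z) (Rdefinitions.Rplus (d x y) (d y z))) /\
    (forall A : set X, open A <->
       forall x, A x -> exists e, Rdefinitions.Rlt Rdefinitions.R0 e /\
                  forall y, Rdefinitions.Rlt (d x y) e -> A y).

Definition embedding_on (S T : topologicalType) (D : set S) (f : S -> T) : Prop :=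
  {within D, continuous f} /\ {in D &, injective f} /\
  forall A : set S, open A -> exists B : set T, open B /\ f @` (A `&` D) = B `&` f @` D.

Definition open_embedding (S T : topologicalType) (f : S -> T) : Prop :=
  injective f /\ continuous f /\ open (range f) /\
  forall A : set S, open A -> exists B : set T, open B /\ f @` A = B `&` range f.

Definition qclass (T : topologicalType) (R : T -> T -> Prop) : Type :=
  {C : set T | exists x, C = R x}.

HB.instance Definition _ (T : topologicalType) (R : T -> T -> Prop) :=
  gen_eqMixin (qclass R).
HB.instance Definition _ (T : topologicalType) (R : T -> T -> Prop) :=
  gen_choiceMixin (qclass R).

Definition qpi (T : topologicalType) (R : T -> T -> Prop) (x : T) : qclass R :=
  exist (fun C => exists y, C = R y) (R x) (ex_intro _ x erefl).

Definition qopen (T : topologicalType) (R : T -> T -> Prop) (U : set (qclass R)) :=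
  open (qpi R @^-1` U).

Lemma qopenT (T : topologicalType) (R : T -> T -> Prop) : qopen (@setT (qclass R)).
Proof. by rewrite /qopen preimage_setT; exact: openT. Qed.

Lemma qopenI (T : topologicalType) (R : T -> T -> Prop) : setI_closed (@qopen T R).
Proof. by move=> A B oA oB; rewrite /qopen preimage_setI; exact: openI. Qed.

Lemma qopen_bigU (T : topologicalType) (R : T -> T -> Prop) (I : Type)
  (f : I -> set (qclass R)) : (forall i, qopen (f i)) -> qopen (\bigcup_i f i).
Proof.
by move=> h; rewrite /qopen preimage_bigcup; apply: bigcup_open => i _; exact: h.
Qed.

HB.instance Definition _ (T : topologicalType) (R : T -> T -> Prop) :=
  isOpenTopological.Build (qclass R) (@qopenT T R) (@qopenI T R) (@qopen_bigU T R).

(** * Virtual orbifold charts (topological skeleton) *)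
Record vchart (X : topologicalType) := VChart {
  cU : topologicalType;               (* underlying space of the orbifold U *)
  cE : topologicalType;               (* total space of the bundle E *)
  cproj : cE -> cU;
  czero : cU -> cE;
  cS : cU -> cE;
  cF : set X;
  cpsi : cU -> X                      (* psi, relevant on S^{-1}(0) *)
}.

Arguments cproj {X} v _.
Arguments czero {X} v _.
Arguments cS {X} v _.
Arguments cpsi {X} v _.

Definition zeroset X (C : vchart X) : set (cU C) := [set x | cS C x = czero C x].
Arguments zeroset {X} C _.

Definition is_vchart X (C : vchart X) : Prop :=
  [/\ continuous (cproj C) /\ continuous (czero C) /\ continuous (cS C),
      (forall x, cproj C (czero C x) = x), (forall x, cproj C (cS C x) = x),
      open (cF C) &
      cpsi C @` zeroset C = cF C /\ embedding_on (zeroset C) (cpsi C)].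

Record vcoord X (CI CJ : vchart X) := VCoord {
  ccU : set (cU CI);
  ccphi : cU CI -> cU CJ;             (* phi_JI, relevant on U_JI *)
  ccphihat : cE CI -> cE CJ           (* hat phi_JI, relevant over U_JI *)
}.

Arguments ccU {X CI CJ} v _.
Arguments ccphi {X CI CJ} v _.
Arguments ccphihat {X CI CJ} v _.

Definition is_vcoord X (CI CJ : vchart X) (T : vcoord CI CJ) : Prop :=
  [/\ open (ccU T) /\
      embedding_on (ccU T) (ccphi T),
      [/\ {within cproj CI @^-1` ccU T, continuous ccphihat T},
          (forall e, ccU T (cproj CI e) ->
             cproj CJ (ccphihat T e) = ccphi T (cproj CI e)),
          (forall e e', ccU T (cproj CI e) -> cproj CI e = cproj CI e' ->
             ccphihat T e = ccphihat T e' -> e = e') &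
          (forall x, ccU T x -> ccphihat T (czero CI x) = czero CJ (ccphi T x))],
      (forall x, ccU T x -> ccphihat T (cS CI x) = cS CJ (ccphi T x)) /\
      (forall x, ccU T x -> zeroset CI x -> cpsi CJ (ccphi T x) = cpsi CI x),
      cpsi CI @` (ccU T `&` zeroset CI) = cF CI `&` cF CJ &
      forall (u : nat -> cU CI) (xinf : cU CI) (yinf : cU CJ),
        (forall n, ccU T (u n)) -> u @ \oo --> xinf ->
        (ccphi T \o u) @ \oo --> yinf -> ccU T xinf /\ yinf = ccphi T xinf].

Record vatlas (X : topologicalType) := VAtlas {
  aidx : finType;
  ale : rel aidx;
  ach : aidx -> vchart X;
  acc : forall I J : aidx, vcoord (ach I) (ach J)   (* used only for I <= J *)
}.

Arguments ale {X} v _ _.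
Arguments ach {X} v _.
Arguments acc {X} v _ _.

Definition is_vatlas X (A : vatlas X) : Prop :=
  [/\
      (forall I, ale A I I) /\
      (forall I J, ale A I J -> ale A J I -> I = J) /\
      (forall I J K, ale A I J -> ale A J K -> ale A I K),
      (forall I, is_vchart (ach A I)) /\
      (forall I J, ale A I J -> is_vcoord (acc A I J)),
      (forall x : X, exists I, cF (ach A I) x),
      (forall I J K, ale A I J -> ale A J K -> forall e : cE (ach A I),
         ccU (acc A I K) (cproj (ach A I) e) -> ccU (acc A I J) (cproj (ach A I) e) ->
         ccU (acc A J K) (ccphi (acc A I J) (cproj (ach A I) e)) ->
         ccphihat (acc A I K) e = ccphihat (acc A J K) (ccphihat (acc A I J) e)) &
      (forall I J, closure (cF (ach A I)) `&` closure (cF (ach A J)) !=set0 ->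
         ale A I J \/ ale A J I)].

Definition vpt X (A : vatlas X) := {I : aidx A & cU (ach A I)}.

Definition curlyvee X (A : vatlas X) (p q : vpt A) : Prop :=
  match p, q with existT i x, existT j y =>
  (exists e : i = j, eq_rect i (fun K => cU (ach A K)) x j e = y) \/
  (ale A i j /\ ccU (acc A i j) x /\ y = ccphi (acc A i j) x) \/
  (ale A j i /\ ccU (acc A j i) y /\ x = ccphi (acc A j i) y)
  end.

Definition prop_equivalence (T : Type) (R : T -> T -> Prop) : Prop :=
  [/\ forall x, R x x, forall x y, R x y -> R y x &
      forall x y z, R x y -> R y z -> R x z].

Section Partial.
Variables (X : topologicalType) (A : vatlas X) (m : nat) (o : 'I_m -> aidx A).

(* indices i >= k (0-based) *)
Definition geidx (k : nat) := {i : 'I_m | k <= i}.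

Definition dunion (k : nat) : topologicalType :=
  {i : geidx k & cU (ach A (o (val i)))}.

Definition dunion_pt (k : nat) (p : dunion k) : vpt A :=
  existT _ (o (val (projT1 p))) (projT2 p).

Definition drel (k : nat) (p q : dunion k) : Prop :=
  curlyvee (dunion_pt p) (dunion_pt q).

Definition Aquot (k : nat) : topologicalType := qclass (@drel k).

Definition geidx_incl (k : nat) (i : geidx k.+1) : geidx k :=
  exist _ (val i) (ltnW (valP i)).

Definition dunion_incl (k : nat) (p : dunion k.+1) : dunion k :=
  existT (fun i : geidx k => cU (ach A (o (val i)))) (geidx_incl (projT1 p)) (projT2 p).
End Partial.

From HB Require Import structures.
From mathcomp Require Import all_boot all_order all_algebra.
From mathcomp Require Import all_classical all_reals all_analysis.

Set Implicit Arguments.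
Unset Strict Implicit.
Unset Printing Implicit Defensive.

Local Open Scope classical_set_scope.

(* The inclusion of disjoint unions preserves and reflects the gluing
   relation, so it induces an injective continuous map of quotients.  The
   only chart added in passing from |A_{k+1}| to |A_k| is U_{I_k}, which is
   minimal among the remaining indices; hence a point of U_{I_k} is glued to
   a point of a higher chart U_J only as x ~ phi_{J I_k}(x).  The saturation
   of an open set therefore meets U_{I_k} in a union of sets
   U_{J I_k} \cap phi_{J I_k}^{-1}(V), which are open because coordinate
   changes are continuous on open domains: the induced map is open. *)

Section Quotient.
Variables (T : topologicalType) (R : T -> T -> Prop).

Lemma qpi_surj (C : qclass R) : exists p, C = qpi R p.
Proof. by case: C => C [x eC]; exists x; exact: eq_exist. Qed.

Lemma open_qclassE (U : set (qclass R)) : open U = open (qpi R @^-1` U).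
Proof. by []. Qed.

Hypothesis Req : prop_equivalence R.

Lemma qpi_eq p q : qpi R p = qpi R q <-> R p q.
Proof.
have [Rrefl Rsym Rtrans] := Req; split.
- by move=> /(congr1 (@proj1_sig _ _)) /= ->; exact: Rrefl.
- move=> Rpq; apply: eq_exist; apply/funext => z; apply/propext.
  by split; [exact: Rtrans (Rsym _ _ Rpq) | exact: Rtrans Rpq].
Qed.

End Quotient.

Section InducedMap.
Variables (S T : topologicalType) (RS : S -> S -> Prop) (RT : T -> T -> Prop).
Variable f : S -> T.
Hypotheses (RSeq : prop_equivalence RS) (RTeq : prop_equivalence RT).
Hypothesis f_rel : forall p q, RT (f p) (f q) <-> RS p q.

Definition qmap (C : qclass RS) : qclass RT :=
  qpi RT (f (projT1 (cid (proj2_sig C)))).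

Lemma qmapE p : qmap (qpi RS p) = qpi RT (f p).
Proof.
rewrite /qmap; case: cid => q /= eRpq.
have [RSrefl RSsym _] := RSeq.
by apply/(qpi_eq RTeq)/f_rel/RSsym; rewrite eRpq; exact: RSrefl.
Qed.

Lemma qmap_inj : injective qmap.
Proof.
move=> C1 C2; have [p1 ->] := qpi_surj C1; have [p2 ->] := qpi_surj C2.
by rewrite !qmapE => /(qpi_eq RTeq)/f_rel/(qpi_eq RSeq).
Qed.

Lemma qmap_continuous : continuous f -> continuous qmap.
Proof.
move=> /continuousP fcont; apply/continuousP => V; rewrite !open_qclassE => oV.
have -> : qpi RS @^-1` (qmap @^-1` V) = f @^-1` (qpi RT @^-1` V).
  by apply/seteqP; split => p /=; rewrite qmapE.
exact: fcont.
Qed.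

Lemma qpi_preimage_qmap_image (U : set (qclass RS)) :
  qpi RT @^-1` (qmap @` U) = [set y | exists2 x, U (qpi RS x) & RT (f x) y].
Proof.
apply/seteqP; split => y /=.
- case=> C UC eCy; move: UC eCy; have [x ->] := qpi_surj C.
  by rewrite qmapE => Ux /(qpi_eq RTeq) RTxy; exists x.
- by case=> x Ux RTxy; exists (qpi RS x) => //; rewrite qmapE; apply/(qpi_eq RTeq).
Qed.

End InducedMap.

Lemma open_map_open_embedding (S T : topologicalType) (f : S -> T) :
  injective f -> continuous f -> (forall A, open A -> open (f @` A)) ->
  open_embedding f.
Proof.
move=> finj fcont fopen; split; [by [] | split; [by [] | split]].
  by apply: fopen; exact: openT.
move=> U oU; exists (f @` U); split; first exact: fopen.
by rewrite setIidl // => _ [x _ <-]; exists x.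
Qed.

Lemma curlyvee_minimal (X : topologicalType) (A : vatlas X) (I J : aidx A)
    (x : cU (ach A I)) (y : cU (ach A J)) :
  I <> J -> ~ ale A J I -> curlyvee (existT _ I x) (existT _ J y) ->
  [/\ ale A I J, ccU (acc A I J) x & y = ccphi (acc A I J) x].
Proof. by move=> nIJ nJI [[eIJ _] | [[? [? ?]] | [? _]]]. Qed.

Section PartialUnions.
Variables (X : topologicalType) (A : vatlas X) (m : nat) (o : 'I_m -> aidx A).
Hypothesis curlyvee_equiv : prop_equivalence (@curlyvee X A).
Hypothesis o_inj : injective o.
Hypothesis o_up : forall (k : 'I_m) (J : aidx A),
  ale A (o k) J -> exists i : 'I_m, k <= i /\ o i = J.
Hypothesis acc_coord : forall I J, ale A I J -> is_vcoord (acc A I J).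

Local Notation Drel k := (@drel X A m o k).

Lemma drel_equivalence k : prop_equivalence (Drel k).
Proof.
by case: curlyvee_equiv => Rrefl Rsym Rtrans; split => [p|p q|p q r];
  [exact: Rrefl | exact: Rsym | exact: Rtrans].
Qed.

Lemma drel_incl k (p q : dunion o k.+1) :
  drel (dunion_incl p) (dunion_incl q) <-> drel p q.
Proof. by []. Qed.

Lemma dunion_incl_continuous k : continuous (@dunion_incl X A m o k).
Proof.
apply/continuousP => V /sigT_openP oV; apply/sigT_openP => j.
exact: (oV (geidx_incl j)).
Qed.

Lemma ale_ord_leq (i j : 'I_m) : ale A (o i) (o j) -> i <= j.
Proof. by move=> /o_up [j' [lej' /o_inj <-]]. Qed.

Definition Aincl k : Aquot o k.+1 -> Aquot o k :=
  @qmap _ _ (Drel k.+1) (Drel k) (@dunion_incl X A m o k).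
Arguments Aincl k : clear implicits.

Lemma AinclE k (p : dunion o k.+1) :
  Aincl k (qpi (Drel k.+1) p) = qpi (Drel k) (dunion_incl p).
Proof. by apply: qmapE; [exact: drel_equivalence.. | exact: drel_incl]. Qed.

Lemma Aincl_preimage k (U : set (Aquot o k.+1)) :
  qpi (Drel k) @^-1` (Aincl k @` U) =
  [set y | exists2 x, U (qpi (Drel k.+1) x) & drel (dunion_incl x) y].
Proof.
by apply: qpi_preimage_qmap_image; [exact: drel_equivalence.. | exact: drel_incl].
Qed.

Lemma Aincl_image_upper k (U : set (Aquot o k.+1)) (i : geidx m k)
    (hi : k < val i) :
  existT _ i @^-1` (qpi (Drel k) @^-1` (Aincl k @` U)) =
  existT _ (exist _ (val i) hi : geidx m k.+1) @^-1` (qpi (Drel k.+1) @^-1` U).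
Proof.
have [drefl _ _] := drel_equivalence k.
rewrite Aincl_preimage; apply/seteqP; split => z /=.
- case=> x Ux Rxz.
  suff <- : qpi (Drel k.+1) x = qpi (Drel k.+1) (existT _ (exist _ (val i) hi) z)
    by [].
  by apply/(qpi_eq (drel_equivalence k.+1)); exact: Rxz.
- by move=> Uz; exists (existT _ (exist _ (val i) hi) z) => //; exact: drefl.
Qed.

Lemma Aincl_image_lower k (U : set (Aquot o k.+1)) (i : geidx m k) :
  val i <= k ->
  existT _ i @^-1` (qpi (Drel k) @^-1` (Aincl k @` U)) =
  \bigcup_(j in [set j : geidx m k.+1 | ale A (o (val i)) (o (val j))])
    (ccU (acc A (o (val i)) (o (val j))) `&`
     ccphi (acc A (o (val i)) (o (val j))) @^-1`
       (existT _ j @^-1` (qpi (Drel k.+1) @^-1` U))).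
Proof.
move=> lei; have [_ dsym _] := drel_equivalence k.
have ltij (j : geidx m k.+1) : val i < val j := leq_ltn_trans lei (valP j).
rewrite Aincl_preimage; apply/seteqP; split => z /=.
- case=> -[j y] Uy /dsym /curlyvee_minimal [].
  + by move=> /o_inj eij; move: (ltij j); rewrite eij ltnn.
  + by move=> /ale_ord_leq; rewrite leqNgt ltij.
  + by move=> aleij Uij eyz; exists j => //; split; rewrite //= -eyz.
- case=> j aleij [Uij Uz]; exists (existT _ j (ccphi (acc A _ _) z)) => //.
  by apply: dsym; right; left.
Qed.

Lemma Aincl_open k (U : set (Aquot o k.+1)) : open U -> open (Aincl k @` U).
Proof.
rewrite !open_qclassE => /sigT_openP oU; apply/sigT_openP => i.
have [hi | lei] := ltnP k (val i).
  by rewrite (Aincl_image_upper U hi); exact: oU.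
rewrite Aincl_image_lower //; apply: bigcup_open => j /= aleij.
have [[oUij [phicont _]] _ _ _ _] := acc_coord aleij.
apply: (continuous_inP _ oUij).1; last exact: oU.
by rewrite -continuous_open_subspace.
Qed.

Lemma Aincl_open_embedding k : open_embedding (Aincl k).
Proof.
apply: open_map_open_embedding; last exact: Aincl_open.
- by apply: qmap_inj; [exact: drel_equivalence.. | exact: drel_incl].
- apply: qmap_continuous; [exact: drel_equivalence.. | exact: drel_incl |].
  exact: dunion_incl_continuous.
Qed.

End PartialUnions.

Theorem lemma7p33 (X : topologicalType) (A : vatlas X)
  (m : nat) (o : 'I_m -> aidx A) :
  compact [set: X] -> metrizable X ->
  is_vatlas A ->
  prop_equivalence (@curlyvee X A) ->
  bijective o ->
  (forall (k : 'I_m) (J : aidx A), ale A (o k) J -> exists i : 'I_m, k <= i /\ o i = J) ->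
  forall k : nat, k.+1 < m ->
  exists g : Aquot o k.+1 -> Aquot o k,
    (forall p : dunion o k.+1, g (qpi (@drel X A m o k.+1) p) = qpi (@drel X A m o k) (dunion_incl p)) /\
    open_embedding g.
Proof.
move=> _ _ [_ [_ acc_coord] _ _ _] curlyvee_equiv [? oK _] o_up k _.
have o_inj : injective o := can_inj oK.
exists (@Aincl X A m o k); split; first exact: (AinclE curlyvee_equiv).
exact: (Aincl_open_embedding curlyvee_equiv o_inj o_up acc_coord).
Qed.
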